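(* Fix a realization of $h$ with $|h_i|\le h_\infty$, and let $n\ge1$, $N\ge n$, $\varepsilon(n)=2h_\infty/n$. Let $\emptyset\ne\mathbf B\subset\Gamma^n$ and $B=\rho^{-1}(\mathbf B)$. Then for every nonempty $A\subset\mathcal S\setminus B$, $$\mathbb P_{\mu_A}[\tau_B<\tau_A]\ge|\Gamma^n|^{-1}e^{-4\beta\varepsilon(n)(2N+1)}\min_{\mathbf x\in\Gamma^n\setminus\mathbf B}\frac{\boldsymbol{\mathrm{cap}}(\{\mathbf x\},\mathbf B)}{\boldsymbol\mu(\mathbf x)}.$$
   Context: Random field Curie–Weiss model: $\mathcal S=\{-1,1\}^N$; $h=(h_i)_{i\le N}$ real with $|h_i|\le h_\infty$; $H(\sigma)=-\frac1{2N}\sum_{i,j}\sigma_i\sigma_j-\sum_ih_i\sigma_i$; $\mu(\sigma)=Z^{-1}e^{-\beta H(\sigma)}2^{-N}$, $\beta\ge0$; Glauber dynamics: discrete-time chain with $p(\sigma,\sigma')=\frac1N\exp(-\beta[H(\sigma')-H(\sigma)]_+)\mathbf 1_{|\sigma-\sigma'|_1=2}$ for $\sigma'\ne\sigma$, $p(\sigma,\sigma)=1-\sum_{\sigma'\ne\sigma}p(\sigma,\sigma')$; $\mathbb P_\nu$ its law started from $\nu$, $\tau_A=\inf\{t>0:\sigma(t)\in A\}$, $\mu_A=\mu[\cdot\mid A]$. Coarse graining: disjoint intervals $I_1,\dots,I_n$ of length $\le2h_\infty/n$ with union $[-h_\infty,h_\infty]$; $\Lambda_\ell=\{i:h_i\in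 I_\ell\}$; $\rho(\sigma)=(\rho_\ell(\sigma))_{\ell\le n}$, $\rho_\ell(\sigma)=\frac1N\sum_{i\in\Lambda_\ell}\sigma_i$; $\Gamma^n=\rho(\mathcal S)$. Induced measure $\boldsymbol\mu(\mathbf x)=\mu[\rho^{-1}(\mathbf x)]$; mesoscopic rates $\mathbf r(\mathbf x,\mathbf y)=\boldsymbol\mu(\mathbf x)^{-1}\sum_{\sigma\in\rho^{-1}(\mathbf x)}\mu(\sigma)\sum_{\sigma'\in\rho^{-1}(\mathbf y)}p(\sigma,\sigma')$; mesoscopic capacity, for disjoint $\mathbf A,\mathbf B\subset\Gamma^n$: $\boldsymbol{\mathrm{cap}}(\mathbf A,\mathbf B)=\inf\{\frac12\sum_{\mathbf x,\mathbf y\in\Gamma^n}\boldsymbol\mu(\mathbf x)\mathbf r(\mathbf x,\mathbf y)(g(\mathbf x)-g(\mathbf y))^2: g:\Gamma^n\to[0,1],\ g|_{\mathbf A}=1,\ g|_{\mathbf B}=0\}$. *)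

From Stdlib Require Import Reals Lra ClassicalEpsilon ClassicalDescription FunctionalExtensionality List.
From mathcomp Require Import all_boot.
Set Implicit Arguments. Unset Strict Implicit. Unset Printing Implicit Defensive.
Open Scope R_scope.

Definition ind (P : Prop) : R := if excluded_middle_informative P then 1 else 0.

Definition is_lower_bound (E : R -> Prop) (m : R) : Prop := forall x, E x -> m <= x.
Definition is_glb (E : R -> Prop) (m : R) : Prop :=
  is_lower_bound E m /\ forall m', is_lower_bound E m' -> m' <= m.

(* infimum of a set of reals (0 if it does not exist) *)
Definition Rinf (E : R -> Prop) : R :=
  match excluded_middle_informative (exists m, is_glb E m) with
  | left H => proj1_sig (constructive_indefinite_description _ H)
  | right _ => 0
  end.

(* limit of a real sequence (0 if it does not converge) *)
Definition Rlim (u : nat -> R) : R :=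
  match excluded_middle_informative (exists l, Un_cv u l) with
  | left H => proj1_sig (constructive_indefinite_description _ H)
  | right _ => 0
  end.

Definition enumerates {X : Type} (E : X -> Prop) (l : list X) : Prop :=
  NoDup l /\ forall x, In x l <-> E x.
Definition flist {X : Type} (E : X -> Prop) : list X :=
  match excluded_middle_informative (exists l, enumerates E l) with
  | left H => proj1_sig (constructive_indefinite_description _ H)
  | right _ => nil
  end.
Definition card_setR {X : Type} (E : X -> Prop) : nat := length (flist E).
Definition lsum {X : Type} (l : list X) (f : X -> R) : R :=
  fold_right (fun x acc => f x + acc) 0 l.

(* sigma in {-1,1}^N encoded as a finite function 'I_N -> bool (true = +1) *)
Definition config (N : nat) := {ffun 'I_N -> bool}.
Definition spin {N : nat} (s : config N) (i : 'I_N) : R := if s i then 1 else -1.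
Definition sumI (N : nat) (F : 'I_N -> R) : R := \big[Rplus/0]_(i : 'I_N) F i.
Definition sumS (N : nat) (F : config N -> R) : R := \big[Rplus/0]_(s : config N) F s.

Definition Ham {N : nat} (h : 'I_N -> R) (s : config N) : R :=
  - (/ (2 * INR N)) * sumI (fun i => sumI (fun j => spin s i * spin s j))
  - sumI (fun i => h i * spin s i).

Definition gibbs_w {N : nat} (h : 'I_N -> R) (beta : R) (s : config N) : R :=
  exp (- beta * Ham h s) * / 2 ^ N.
Definition Zpart {N : nat} (h : 'I_N -> R) (beta : R) : R := sumS (gibbs_w h beta).
Definition mu {N : nat} (h : 'I_N -> R) (beta : R) (s : config N) : R :=
  gibbs_w h beta s / Zpart h beta.

Definition l1dist {N : nat} (s s' : config N) : R := sumI (fun i => Rabs (spin s i - spin s' i)).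

Definition poff {N : nat} (h : 'I_N -> R) (beta : R) (s s' : config N) : R :=
  ind (l1dist s s' = 2) * / INR N * exp (- beta * Rmax 0 (Ham h s' - Ham h s)).
Definition pker {N : nat} (h : 'I_N -> R) (beta : R) (s s' : config N) : R :=
  if s == s' then 1 - sumS (fun s'' => ind (s'' <> s) * poff h beta s s'')
  else poff h beta s s'.

(* hitB T s = P_s[ tau_B <= T and tau_B < tau_A ]  (tau_X = inf{t > 0 : sigma(t) in X}),
   computed by decomposing on the first step of the chain. *)
Fixpoint hitB {N : nat} (h : 'I_N -> R) (beta : R) (A B : config N -> Prop)
    (T : nat) (s : config N) : R :=
  match T with
  | O => 0
  | S T' => sumS (fun s' => pker h beta s s' *
              (ind (B s' /\ ~ A s') + ind (~ A s' /\ ~ B s') * hitB h beta A B T' s'))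
  end.

Definition muSet {N : nat} (h : 'I_N -> R) (beta : R) (A : config N -> Prop) : R :=
  sumS (fun s => ind (A s) * mu h beta s).

(* P_{mu_A}[tau_B < tau_A] *)
Definition hitprob {N : nat} (h : 'I_N -> R) (beta : R) (A B : config N -> Prop) : R :=
  Rlim (fun T => sumS (fun s => ind (A s) * (mu h beta s / muSet h beta A) * hitB h beta A B T s)).

(* lab i = the index l with h_i in I_l, i.e. i in Lambda_l *)
Definition rho {N n : nat} (lab : 'I_N -> 'I_n) (s : config N) : 'I_n -> R :=
  fun l => / INR N * sumI (fun i => (if lab i == l then 1 else 0) * spin s i).

Definition Gamma {N n : nat} (lab : 'I_N -> 'I_n) (x : 'I_n -> R) : Prop :=
  exists s : config N, rho lab s = x.

Definition mum {N n : nat} (h : 'I_N -> R) (beta : R) (lab : 'I_N -> 'I_n)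
    (x : 'I_n -> R) : R :=
  sumS (fun s => ind (rho lab s = x) * mu h beta s).

Definition rm {N n : nat} (h : 'I_N -> R) (beta : R) (lab : 'I_N -> 'I_n)
    (x y : 'I_n -> R) : R :=
  / mum h beta lab x *
  sumS (fun s => ind (rho lab s = x) * mu h beta s *
          sumS (fun s' => ind (rho lab s' = y) * pker h beta s s')).

Definition dirichlet {N n : nat} (h : 'I_N -> R) (beta : R) (lab : 'I_N -> 'I_n)
    (g : ('I_n -> R) -> R) : R :=
  / 2 * lsum (flist (Gamma lab)) (fun x => lsum (flist (Gamma lab)) (fun y =>
          mum h beta lab x * rm h beta lab x y * (g x - g y) ^ 2)).

Definition mcap {N n : nat} (h : 'I_N -> R) (beta : R) (lab : 'I_N -> 'I_n)
    (Am Bm : ('I_n -> R) -> Prop) : R :=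
  Rinf (fun v => exists g : ('I_n -> R) -> R,
          (forall x, Gamma lab x -> 0 <= g x <= 1) /\
          (forall x, Gamma lab x -> Am x -> g x = 1) /\
          (forall x, Gamma lab x -> Bm x -> g x = 0) /\
          v = dirichlet h beta lab g).

(* The hitting probability is cap(A,B)/mu(A), the capacity being the Dirichlet energy of
   the equilibrium potential.  Replacing h by a field that is constant on every block
   Lambda_l changes beta H by at most beta N eps(n), hence every product mu(s) p(s,s') and
   every mass by a factor within e^(+-2 beta N eps(n)).  For the block-constant field the
   dynamics commutes with permutations inside blocks, so the escape probability from a
   level set rho^-1(x) is the same at all its points: the capacity of the level set is its
   mass times that escape probability, and its equilibrium potential descends to a test
   function for the mesoscopic capacity of {x}.  Taking the level x that carries at least
   a 1/|Gamma^n| share of mu(A) and using cap(A,B) >= cap(A /\ rho^-1(x), B) yields the bound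
   with the constant e^(-8 beta N eps(n)) >= e^(-4 beta eps(n) (2N+1)). *)

From Pilot Require Import Defs.
From Stdlib Require Import Reals Lra Lia List.
From Stdlib Require Import ClassicalEpsilon ClassicalDescription FunctionalExtensionality.
From HB Require Import structures.
From mathcomp Require Import all_boot all_fingroup.
(* Re-import so that [ind] is [Defs.ind] again, not Stdlib's [Rtopology.ind]. *)
Import Defs.
Set Implicit Arguments. Unset Strict Implicit. Unset Printing Implicit Defensive.
Open Scope R_scope.

Lemma Rplus_assoc' : associative Rplus. Proof. by move=> *; ring. Qed.
Lemma Rmult_assoc' : associative Rmult. Proof. by move=> *; ring. Qed.
HB.instance Definition _ := Monoid.isComLaw.Build R 0 Rplus Rplus_assoc' Rplus_comm Rplus_0_l.
HB.instance Definition _ := Monoid.isComLaw.Build R 1 Rmult Rmult_assoc' Rmult_comm Rmult_1_l.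
Lemma Rmult_left_zero : left_zero 0 Rmult. Proof. by move=> x; ring. Qed.
Lemma Rmult_right_zero : right_zero 0 Rmult. Proof. by move=> x; ring. Qed.
HB.instance Definition _ := Monoid.isMulLaw.Build R 0 Rmult Rmult_left_zero Rmult_right_zero.
Lemma Rmult_plus_distr_l' : left_distributive Rmult Rplus. Proof. by move=> *; ring. Qed.
Lemma Rmult_plus_distr_r' : right_distributive Rmult Rplus. Proof. by move=> *; ring. Qed.
HB.instance Definition _ :=
  Monoid.isAddLaw.Build R Rmult Rplus Rmult_plus_distr_l' Rmult_plus_distr_r'.

Section FinSums.
Variable I : finType.
Implicit Types F G : I -> R.

Lemma sum_le F G : (forall i, F i <= G i) ->
  \big[Rplus/0]_i F i <= \big[Rplus/0]_i G i.
Proof. by move=> H; elim/big_ind2: _ => // *; lra. Qed.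

Lemma sum_ge0 F : (forall i, 0 <= F i) -> 0 <= \big[Rplus/0]_i F i.
Proof. by move=> H; elim/big_ind: _ => // *; lra. Qed.

Lemma sum_sub F G :
  \big[Rplus/0]_i (F i - G i) = \big[Rplus/0]_i F i - \big[Rplus/0]_i G i.
Proof.
rewrite /Rminus big_split /=.
by rewrite (big_morph Ropp Ropp_plus_distr Ropp_0).
Qed.

Lemma sum_ge_two F (a b : I) : a != b -> (forall i, 0 <= F i) ->
  F a + F b <= \big[Rplus/0]_i F i.
Proof.
move=> ab F0; rewrite (bigD1 a) // (bigD1 b) /=; last by rewrite eq_sym.
have : 0 <= \big[Rplus/0]_(i | (i != a) && (i != b)) F i by elim/big_ind: _ => // *; lra.
lra.
Qed.

Lemma sum_ge_term F (a : I) : (forall i, 0 <= F i) -> F a <= \big[Rplus/0]_i F i.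
Proof.
move=> F0; rewrite (bigD1 a) //=.
have : 0 <= \big[Rplus/0]_(i | i != a) F i by elim/big_ind: _ => // *; lra.
lra.
Qed.

End FinSums.

Lemma sum_const_ord (N : nat) (c : R) : \big[Rplus/0]_(i < N) c = INR N * c.
Proof.
rewrite big_const_ord; elim: N => [|k IH]; first by rewrite /=; ring.
by rewrite S_INR /= IH; ring.
Qed.

Lemma exp_le x y : x <= y -> exp x <= exp y.
Proof. by case=> [/exp_increasing/Rlt_le | ->] //; apply: Rle_refl. Qed.

Lemma ind_T (P : Prop) : P -> ind P = 1.
Proof. by rewrite /ind; case: excluded_middle_informative. Qed.
Lemma ind_F (P : Prop) : ~ P -> ind P = 0.
Proof. by rewrite /ind; case: excluded_middle_informative. Qed.
Lemma ind_01 (P : Prop) : 0 <= ind P <= 1.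
Proof. by rewrite /ind; case: excluded_middle_informative => ? /=; lra. Qed.
Lemma ind_ext (P Q : Prop) : (P <-> Q) -> ind P = ind Q.
Proof.
move=> PQ; case: (classic P) => HP; first by rewrite !ind_T //; tauto.
by rewrite !ind_F //; tauto.
Qed.

Definition flip {N} (s : config N) (i : 'I_N) : config N :=
  [ffun k => if k == i then ~~ s k else s k].

Lemma spin_dist {N} (s s' : config N) i :
  Rabs (spin s i - spin s' i) = if s i == s' i then 0 else 2.
Proof.
rewrite /spin; case: (s i); case: (s' i) => /=; rewrite ?Rminus_diag ?Rabs_R0 //;
  rewrite /Rabs; case: Rcase_abs; lra.
Qed.

Lemma l1dist2_flip {N} (s s' : config N) : l1dist s s' = 2 -> exists i, s' = flip s i.
Proof.
rewrite /l1dist /sumI => D2.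
case: (pickP (fun i => s i != s' i)) => [i Di|Dnone]; last first.
  rewrite big1 in D2; first lra.
  by move=> i _; rewrite spin_dist; move: (Dnone i) => /= /negbFE ->.
exists i; apply/ffunP => j; rewrite ffunE; case: (eqVneq j i) => [->|ji].
  by move: Di; case: (s i); case: (s' i).
apply/eqP; apply: contraT => Dj; exfalso.
have := @sum_ge_two _ (fun k => Rabs (spin s k - spin s' k)) i j.
rewrite eq_sym ji => /(_ isT (fun k => Rabs_pos _)).
by rewrite !spin_dist (negbTE Di) eq_sym (negbTE Dj) D2; lra.
Qed.

Lemma l1dist_sym {N} (s s' : config N) : l1dist s s' = l1dist s' s.
Proof. by apply: eq_bigr => i _; rewrite -Rabs_Ropp; f_equal; ring. Qed.

Section GlauberChain.
Variables (N : nat) (h : 'I_N -> R) (beta : R).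
Hypothesis N_gt0 : (0 < N)%N.
Hypothesis beta_ge0 : 0 <= beta.
Implicit Types s : config N.

Lemma INR_N_gt0 : 0 < INR N.
Proof. by apply: lt_0_INR; apply/ltP. Qed.

Lemma poff_ge0 s s' : 0 <= poff h beta s s'.
Proof.
have := ind_01 (l1dist s s' = 2); have := Rinv_0_lt_compat _ INR_N_gt0.
have := exp_pos (- beta * Rmax 0 (Ham h s' - Ham h s)); rewrite /poff => *.
by apply: Rmult_le_pos; [apply: Rmult_le_pos|]; lra.
Qed.

Lemma poff_le s s' : poff h beta s s' <= ind (l1dist s s' = 2) * / INR N.
Proof.
have := ind_01 (l1dist s s' = 2); have := Rinv_0_lt_compat _ INR_N_gt0 => *.
have : exp (- beta * Rmax 0 (Ham h s' - Ham h s)) <= 1.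
  rewrite -exp_0; apply: exp_le.
  have := Rmax_l 0 (Ham h s' - Ham h s); nra.
rewrite /poff => ?; have : 0 <= ind (l1dist s s' = 2) * / INR N by nra.
nra.
Qed.

Lemma card_neighbours s : sumS (fun s' => ind (l1dist s s' = 2)) <= INR N.
Proof.
apply: Rle_trans (_ : sumS (fun s' => sumI (fun i => ind (s' = flip s i))) <= _).
  apply: sum_le => s'; case: (classic (l1dist s s' = 2)) => D2.
    rewrite ind_T //; have [i ->] := l1dist2_flip D2.
    have := @sum_ge_term _ (fun j => ind (flip s i = flip s j)) i (fun _ => proj1 (ind_01 _)).
    by rewrite ind_T.
  by rewrite ind_F //; apply: sum_ge0 => i; case: (ind_01 (s' = flip s i)).
rewrite /sumS /sumI exchange_big (eq_bigr (fun _ => 1)) ?sum_const_ord; first lra.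
move=> i _; rewrite (bigD1 (flip s i)) //= ind_T // big1 ?Rplus_0_r // => s' /eqP ne.
by rewrite ind_F.
Qed.

Lemma sum_poff_le1 s : sumS (fun s' => ind (s' <> s) * poff h beta s s') <= 1.
Proof.
apply: Rle_trans (_ : sumS (fun s' => ind (l1dist s s' = 2) * / INR N) <= _).
  apply: sum_le => s'; apply: Rle_trans (poff_le s s').
  rewrite -[X in _ <= X]Rmult_1_l; apply: Rmult_le_compat_r; first exact: poff_ge0.
  exact: proj2 (ind_01 _).
rewrite /sumS -big_distrl /=; have := card_neighbours s; have := INR_N_gt0 => *.
apply: Rle_trans (_ : INR N * / INR N <= _); last by rewrite Rinv_r; lra.
by apply: Rmult_le_compat_r => //; apply: Rlt_le; apply: Rinv_0_lt_compat.
Qed.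

Lemma pker_ge0 s s' : 0 <= pker h beta s s'.
Proof. by rewrite /pker; case: eqP => _; [have := sum_poff_le1 s; lra | apply: poff_ge0]. Qed.

Lemma pker_sum1 s : sumS (fun s' => pker h beta s s') = 1.
Proof.
rewrite /sumS (bigD1 s) //= /pker eqxx.
rewrite (eq_bigr (fun s' => ind (s' <> s) * poff h beta s s')); last first.
  by move=> s' ne; rewrite eq_sym (negbTE ne) ind_T; [ring | apply/eqP].
rewrite /sumS [X in _ - X](bigD1 s) //= (ind_F (P := s <> s)) //.
by rewrite Rmult_0_l Rplus_0_l /Rminus Rplus_assoc Rplus_opp_l Rplus_0_r.
Qed.

Lemma gibbs_w_gt0 s : 0 < gibbs_w h beta s.
Proof. by apply: Rmult_lt_0_compat; [apply: exp_pos | apply/Rinv_0_lt_compat/pow_lt; lra]. Qed.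

Lemma Zpart_gt0 : 0 < Zpart h beta.
Proof.
apply: Rlt_le_trans (gibbs_w_gt0 [ffun=> true]) _.
exact: sum_ge_term (fun s => Rlt_le _ _ (gibbs_w_gt0 s)).
Qed.

Lemma mu_gt0 s : 0 < mu h beta s.
Proof. exact: Rmult_lt_0_compat (gibbs_w_gt0 s) (Rinv_0_lt_compat _ Zpart_gt0). Qed.

Lemma gibbs_w_poff s s' : gibbs_w h beta s * poff h beta s s' =
  ind (l1dist s s' = 2) * / INR N * (exp (- beta * Rmax (Ham h s) (Ham h s')) * / 2 ^ N).
Proof.
have -> : Rmax (Ham h s) (Ham h s') = Ham h s + Rmax 0 (Ham h s' - Ham h s).
  by rewrite /Rmax; do 2 case: Rle_dec; lra.
by rewrite /gibbs_w /poff Rmult_plus_distr_l exp_plus; ring.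
Qed.

Lemma detailed_balance s s' :
  mu h beta s * pker h beta s s' = mu h beta s' * pker h beta s' s.
Proof.
rewrite /mu /Rdiv /pker; case: (eqVneq s s') => [->//|ne].
have := gibbs_w_poff s' s; rewrite l1dist_sym Rmax_comm -gibbs_w_poff => E.
transitivity (gibbs_w h beta s' * poff h beta s' s * / Zpart h beta); last by ring.
by rewrite E; ring.
Qed.

End GlauberChain.

Lemma cv_const (c : R) : Un_cv (fun _ => c) c.
Proof. by move=> e e_gt0; exists 0%nat => n _; rewrite /R_dist Rminus_diag Rabs_R0. Qed.

Lemma Rlim_eq u l : Un_cv u l -> Rlim u = l.
Proof.
move=> ul; rewrite /Rlim; case: excluded_middle_informative => [ex|]; last by case; exists l.
by case: (constructive_indefinite_description _ ex) => l' ul' /=; apply: UL_sequence ul' ul.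
Qed.

Lemma cv_sum (I : finType) (u : I -> nat -> R) (l : I -> R) : (forall i, Un_cv (u i) (l i)) ->
  Un_cv (fun T => \big[Rplus/0]_i u i T) (\big[Rplus/0]_i l i).
Proof.
move=> ul; elim: (index_enum I) => [|i r IH]; [rewrite big_nil | rewrite big_cons].
  by apply: Un_cv_ext (cv_const 0) => T; rewrite big_nil.
by apply: Un_cv_ext (CV_plus _ _ _ _ (ul i) IH) => T; rewrite big_cons.
Qed.

Lemma step_value_01 (a b : Prop) x : 0 <= x <= 1 -> 0 <= ind (b /\ ~ a) + ind (~ a /\ ~ b) * x <= 1.
Proof.
move=> x01; case: (classic a) => Ha; first by rewrite !ind_F; try tauto; lra.
case: (classic b) => Hb; first by rewrite ind_T ?ind_F; try tauto; lra.
by rewrite ind_F ?ind_T; try tauto; lra.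
Qed.

Section Escape.
Variables (N : nat) (h : 'I_N -> R) (beta : R).
Hypothesis N_gt0 : (0 < N)%N.
Hypothesis beta_ge0 : 0 <= beta.
Variables (A B : config N -> Prop).
Implicit Types s : config N.

Lemma pker_average_01 s (f : config N -> R) : (forall s', 0 <= f s' <= 1) ->
  0 <= sumS (fun s' => pker h beta s s' * f s') <= 1.
Proof.
move=> f01; split.
  by apply: sum_ge0 => s'; apply: Rmult_le_pos; [exact: pker_ge0 | case: (f01 s')].
rewrite -(pker_sum1 h beta s); apply: sum_le => s'.
by have := pker_ge0 h N_gt0 beta_ge0 s s'; have := f01 s'; move=> *; nra.
Qed.

Lemma hitB_01 T s : 0 <= hitB h beta A B T s <= 1.
Proof.
elim: T s => [|T IH] s /=; first lra.
by apply: pker_average_01 => s'; apply: step_value_01.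
Qed.

Lemma hitB_succ T s : hitB h beta A B T.+1 s =
  sumS (fun s' => pker h beta s s' *
    (ind (B s' /\ ~ A s') + ind (~ A s' /\ ~ B s') * hitB h beta A B T s')).
Proof. by []. Qed.

Lemma hitB_le_succ T s : hitB h beta A B T s <= hitB h beta A B T.+1 s.
Proof.
elim: T s => [|T IH] s; first by case: (hitB_01 1 s).
rewrite hitB_succ [hitB _ _ _ _ T.+2 s]hitB_succ.
apply: sum_le => s'; apply: Rmult_le_compat_l; first exact: pker_ge0.
by have := ind_01 (~ A s' /\ ~ B s'); have := IH s'; move=> *; nra.
Qed.

Definition escape s := Rlim (fun T => hitB h beta A B T s).

Lemma escape_cv s : Un_cv (fun T => hitB h beta A B T s) (escape s).
Proof.
have [l Hl] : {l | Un_cv (fun T => hitB h beta A B T s) l}.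
  apply: growing_cv; first by move=> T; apply: hitB_le_succ.
  by exists 1 => _ [T ->]; case: (hitB_01 T s).
by rewrite /escape (Rlim_eq Hl).
Qed.

Lemma escape_01 s : 0 <= escape s <= 1.
Proof.
split.
  by apply: Rle_cv_lim (cv_const 0) (escape_cv s) => T; case: (hitB_01 T s).
by apply: Rle_cv_lim (escape_cv s) (cv_const 1) => T; case: (hitB_01 T s).
Qed.

(* P_s[the chain, observed from time 0 on, visits B before A]. *)
Definition reach s := ind (B s /\ ~ A s) + ind (~ A s /\ ~ B s) * escape s.

Lemma escape_step s : escape s = sumS (fun s' => pker h beta s s' * reach s').
Proof.
apply: UL_sequence (escape_cv s) _; apply: (CV_shift _ 1).
apply: (Un_cv_ext (fun T => hitB h beta A B T.+1 s)); first by move=> T; rewrite Nat.add_1_r.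
apply: cv_sum => s'; apply: CV_mult; first exact: cv_const.
by apply: CV_plus; [exact: cv_const | apply: CV_mult; [exact: cv_const | exact: escape_cv]].
Qed.

End Escape.

Section Dirichlet.
Variables (N : nat) (h : 'I_N -> R) (beta : R).
Hypothesis N_gt0 : (0 < N)%N.
Hypothesis beta_ge0 : 0 <= beta.
Implicit Types (s : config N) (f g : config N -> R).

Definition Pavg f s := sumS (fun s' => pker h beta s s' * f s').

Definition dirf f :=
  / 2 * sumS (fun s => sumS (fun s' => mu h beta s * pker h beta s s' * (f s - f s') ^ 2)).

Definition dirf_bilin f g :=
  sumS (fun s => sumS (fun s' => mu h beta s * pker h beta s s' * ((f s - f s') * (g s - g s')))).

Lemma dirf_ge0 f : 0 <= dirf f.
Proof.
apply: Rmult_le_pos; first lra; apply: sum_ge0 => s; apply: sum_ge0 => s'.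
apply: Rmult_le_pos; last exact: pow2_ge_0.
exact: Rmult_le_pos (Rlt_le _ _ (mu_gt0 h beta s)) (pker_ge0 h N_gt0 beta_ge0 s s').
Qed.

(* Summation by parts; detailed balance turns the [g s'] half into minus the [g s] half. *)
Lemma dirf_bilin_green f g :
  dirf_bilin f g = 2 * sumS (fun s => mu h beta s * g s * (f s - Pavg f s)).
Proof.
have split_g : dirf_bilin f g =
    sumS (fun s => sumS (fun s' => mu h beta s * pker h beta s s' * (f s - f s') * g s))
  - sumS (fun s => sumS (fun s' => mu h beta s * pker h beta s s' * (f s - f s') * g s')).
  rewrite /sumS -sum_sub; apply: eq_bigr => s _; rewrite -sum_sub.
  by apply: eq_bigr => s' _; ring.
have swap : sumS (fun s => sumS (fun s' => mu h beta s * pker h beta s s' * (f s - f s') * g s'))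
  = - sumS (fun s => sumS (fun s' => mu h beta s * pker h beta s s' * (f s - f s') * g s)).
  rewrite /sumS exchange_big (big_morph Ropp Ropp_plus_distr Ropp_0); apply: eq_bigr => s _.
  rewrite (big_morph Ropp Ropp_plus_distr Ropp_0); apply: eq_bigr => s' _.
  by rewrite (detailed_balance h beta s' s); ring.
have row (s : config N) : sumS (fun s' => mu h beta s * pker h beta s s' * (f s - f s') * g s)
    = mu h beta s * g s * (f s - Pavg f s).
  have mean_const : sumS (fun s' => pker h beta s s' * f s) = f s.
    by rewrite /sumS -big_distrl /= -/(sumS _) pker_sum1 Rmult_1_l.
  rewrite /Pavg -[X in X - _]mean_const /sumS -sum_sub big_distrr /=.
  by apply: eq_bigr => s' _; ring.
have sum_rows : sumS (fun s => sumS (fun s' => mu h beta s * pker h beta s s' * (f s - f s') * g s))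
    = sumS (fun s => mu h beta s * g s * (f s - Pavg f s)).
  by apply: eq_bigr => s _; apply: row.
by rewrite split_g swap sum_rows; ring.
Qed.

Lemma dirf_add f g : dirf (fun s => f s + g s) = dirf f + dirf g + dirf_bilin f g.
Proof.
rewrite /dirf /dirf_bilin /sumS.
have -> : forall a b c, / 2 * a + / 2 * b + c = / 2 * (a + b + 2 * c) by move=> *; field.
congr (_ * _); rewrite big_distrr -!big_split /=; apply: eq_bigr => s _.
by rewrite big_distrr -!big_split /=; apply: eq_bigr => s' _; ring.
Qed.

Lemma dirf_green f : dirf f = sumS (fun s => mu h beta s * f s * (f s - Pavg f s)).
Proof.
have -> : dirf f = / 2 * dirf_bilin f f.
  by congr (_ * _); apply: eq_bigr => s _; apply: eq_bigr => s' _; ring.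
by rewrite dirf_bilin_green; field.
Qed.

Lemma dirichlet_principle v f : (forall s, f s <> v s -> v s = Pavg v s) -> dirf v <= dirf f.
Proof.
move=> v_harm; have -> : f = fun s => v s + (f s - v s).
  by apply: functional_extensionality => s; ring.
rewrite dirf_add dirf_bilin_green.
have -> : sumS (fun s => mu h beta s * (f s - v s) * (v s - Pavg v s)) = 0.
  apply: big1 => s _; case: (Req_dec (f s) (v s)) => [->|ne]; first ring.
  by rewrite -v_harm //; ring.
by have := dirf_ge0 (fun s => f s - v s); lra.
Qed.

End Dirichlet.

Section Capacity.
Variables (N : nat) (h : 'I_N -> R) (beta : R).
Hypothesis N_gt0 : (0 < N)%N.
Hypothesis beta_ge0 : 0 <= beta.
Variables (A B : config N -> Prop).
Hypothesis AB_disj : forall s, A s -> ~ B s.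
Implicit Types s : config N.

Definition eqpot s := 1 - reach h beta A B s.

Lemma Pavg_eqpot s : Pavg h beta eqpot s = 1 - escape h beta A B s.
Proof.
rewrite /Pavg /eqpot (escape_step h N_gt0 beta_ge0 A B s) -[X in X - _](pker_sum1 h beta s).
by rewrite /sumS -sum_sub; apply: eq_bigr => s' _; ring.
Qed.

Lemma eqpot_A s : A s -> eqpot s = 1.
Proof. by move=> As; rewrite /eqpot /reach !ind_F; try tauto; ring. Qed.

Lemma eqpot_B s : B s -> eqpot s = 0.
Proof.
move=> Bs; have nAs : ~ A s by move/AB_disj.
by rewrite /eqpot /reach ind_T ?ind_F; try tauto; ring.
Qed.

Lemma eqpot_harmonic s : ~ A s -> ~ B s -> eqpot s = Pavg h beta eqpot s.
Proof. by move=> nAs nBs; rewrite Pavg_eqpot /eqpot /reach ind_F ?ind_T; try tauto; ring. Qed.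

Lemma eqpot_01 s : 0 <= eqpot s <= 1.
Proof.
have := step_value_01 (A s) (B s) (escape_01 h N_gt0 beta_ge0 A B s).
by rewrite /eqpot /reach; lra.
Qed.

Definition cap := dirf h beta eqpot.

Lemma cap_escape : cap = sumS (fun s => ind (A s) * mu h beta s * escape h beta A B s).
Proof.
rewrite /cap dirf_green //; apply: eq_bigr => s _; case: (classic (A s)) => As.
  by rewrite ind_T // Pavg_eqpot eqpot_A //; ring.
rewrite ind_F //; case: (classic (B s)) => Bs; first by rewrite eqpot_B //; ring.
by rewrite -eqpot_harmonic //; ring.
Qed.

Lemma cap_le_dirf f : (forall s, A s -> f s = 1) -> (forall s, B s -> f s = 0) ->
  cap <= dirf h beta f.
Proof.
move=> fA fB; apply: dirichlet_principle => // s ne.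
case: (classic (A s)) => As; first by case: ne; rewrite fA // eqpot_A.
case: (classic (B s)) => Bs; first by case: ne; rewrite fB // eqpot_B.
exact: eqpot_harmonic.
Qed.

Lemma hitprob_cap : 0 < muSet h beta A -> hitprob h beta A B = cap / muSet h beta A.
Proof.
move=> muA_gt0; apply: Rlim_eq; rewrite cap_escape /Rdiv /sumS big_distrl /=.
apply: cv_sum => s.
apply: (Un_cv_ext (fun T => ind (A s) * (mu h beta s / muSet h beta A) *
  hitB h beta A B T s)) => //.
have -> : ind (A s) * mu h beta s * escape h beta A B s * / muSet h beta A =
  ind (A s) * (mu h beta s / muSet h beta A) * escape h beta A B s by rewrite /Rdiv; ring.
exact: CV_mult (cv_const _) (escape_cv h N_gt0 beta_ge0 A B s).
Qed.

End Capacity.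

Lemma hitB_anti N (h : 'I_N -> R) beta (A A' B : config N -> Prop) :
  (0 < N)%N -> 0 <= beta -> (forall s, A' s -> A s) -> (forall s, A s -> ~ B s) ->
  forall T s, hitB h beta A B T s <= hitB h beta A' B T s.
Proof.
move=> N_gt0 beta_ge0 A'A AB; elim=> [|T IH] s /=; first lra.
apply: sum_le => s'; apply: Rmult_le_compat_l; first exact: pker_ge0.
have := hitB_01 h N_gt0 beta_ge0 A' B T s'; have := ind_01 (~ A' s' /\ ~ B s').
case: (classic (B s')) => Bs'.
  have nAs' : ~ A s' by move/AB.
  have nA's' : ~ A' s' by move/A'A.
  rewrite (ind_T (P := B s' /\ ~ A s')) // (ind_T (P := B s' /\ ~ A' s')) //.
  by rewrite (ind_F (P := ~ A s' /\ _)) ?(ind_F (P := ~ A' s' /\ _)); try tauto; lra.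
rewrite (ind_F (P := B s' /\ ~ A s')) ?(ind_F (P := B s' /\ ~ A' s')); try tauto.
case: (classic (A s')) => As'.
  by rewrite (ind_F (P := ~ A s' /\ _)); try tauto; move=> *; nra.
have nA's' : ~ A' s' by move/A'A.
rewrite (ind_T (P := ~ A s' /\ _)) ?(ind_T (P := ~ A' s' /\ _)); try tauto.
by have := IH s'; lra.
Qed.

Lemma escape_anti N (h : 'I_N -> R) beta (A A' B : config N -> Prop) :
  (0 < N)%N -> 0 <= beta -> (forall s, A' s -> A s) -> (forall s, A s -> ~ B s) ->
  forall s, escape h beta A B s <= escape h beta A' B s.
Proof.
move=> N_gt0 beta_ge0 A'A AB s.
apply: Rle_cv_lim (escape_cv h N_gt0 beta_ge0 A B s) (escape_cv h N_gt0 beta_ge0 A' B s).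
by move=> T; apply: hitB_anti.
Qed.

Lemma muSet_gt0 N (h : 'I_N -> R) beta (A : config N -> Prop) s : A s -> 0 < muSet h beta A.
Proof.
move=> As; apply: Rlt_le_trans (mu_gt0 h beta s) _.
have := @sum_ge_term _ (fun s' => ind (A s') * mu h beta s') s; rewrite ind_T // Rmult_1_l.
apply=> s'; exact: Rmult_le_pos (proj1 (ind_01 _)) (Rlt_le _ _ (mu_gt0 h beta s')).
Qed.

Section CapacityBounds.
Variables (N : nat) (h : 'I_N -> R) (beta : R).
Hypothesis N_gt0 : (0 < N)%N.
Hypothesis beta_ge0 : 0 <= beta.
Variables (A B : config N -> Prop).
Hypothesis AB_disj : forall s, A s -> ~ B s.

Lemma cap_mono (A' : config N -> Prop) : (forall s, A' s -> A s) ->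
  cap h beta A' B <= cap h beta A B.
Proof.
move=> A'A; apply: cap_le_dirf => // [s /A'A /AB_disj | s /A'A | s] //.
  exact: eqpot_A.
exact: eqpot_B.
Qed.

Lemma cap_ge_escape (L : R) : (forall s, A s -> L <= escape h beta A B s) ->
  muSet h beta A * L <= cap h beta A B.
Proof.
move=> L_le; rewrite cap_escape // /muSet /sumS big_distrl; apply: sum_le => s /=.
case: (classic (A s)) => As; last by rewrite ind_F //; lra.
rewrite ind_T // !Rmult_1_l; apply: Rmult_le_compat_l; last exact: L_le.
exact: Rlt_le (mu_gt0 h beta s).
Qed.

Lemma cap_eq_escape (L : R) : (forall s, A s -> escape h beta A B s = L) ->
  cap h beta A B = muSet h beta A * L.
Proof.
move=> escL; rewrite cap_escape // /muSet /sumS big_distrl; apply: eq_bigr => s _ /=.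
by case: (classic (A s)) => As; [rewrite escL | rewrite ind_F]; rewrite //; ring.
Qed.

End CapacityBounds.

Definition ham_gap (N : nat) (beta eps : R) := beta * (INR N * eps).

Section FieldComparison.
Variables (N : nat) (h h' : 'I_N -> R) (beta eps : R).
Hypothesis beta_ge0 : 0 <= beta.
Hypothesis hh' : forall i, Rabs (h i - h' i) <= eps.
Implicit Types s : config N.
Let d := ham_gap N beta eps.

Lemma Ham_perturb s : Rabs (Ham h s - Ham h' s) <= INR N * eps.
Proof.
have -> : Ham h s - Ham h' s = - sumI (fun i => (h i - h' i) * spin s i).
  have -> : sumI (fun i => (h i - h' i) * spin s i) =
      sumI (fun i => h i * spin s i) - sumI (fun i => h' i * spin s i).
    by rewrite -sum_sub; apply: eq_bigr => i _; ring.
  by rewrite /Ham; ring.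
have term_bound i : - eps <= (h i - h' i) * spin s i <= eps.
  by have := hh' i; rewrite /spin; case: (s i); rewrite /Rabs; case: Rcase_abs; lra.
rewrite Rabs_Ropp; apply: Rabs_le; split.
  have -> : - (INR N * eps) = INR N * - eps by ring.
  rewrite -sum_const_ord; apply: sum_le => i; exact: proj1 (term_bound i).
by rewrite -sum_const_ord; apply: sum_le => i; exact: proj2 (term_bound i).
Qed.

Lemma exp_gibbs_perturb x x' : x <= x' + INR N * eps ->
  exp (- d) * exp (- beta * x') <= exp (- beta * x).
Proof.
move=> xx'; rewrite -exp_plus; apply: exp_le.
by have := Rmult_le_compat_l _ _ _ beta_ge0 xx'; rewrite /d /ham_gap; lra.
Qed.

Lemma gibbs_w_le s : gibbs_w h beta s <= exp d * gibbs_w h' beta s.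
Proof.
rewrite /gibbs_w -Rmult_assoc; apply: Rmult_le_compat_r.
  by apply/Rlt_le/Rinv_0_lt_compat/pow_lt; lra.
rewrite -exp_plus; apply: exp_le.
have gap : Ham h' s - Ham h s <= INR N * eps.
  by have := Ham_perturb s; rewrite /Rabs; case: Rcase_abs; lra.
by have := Rmult_le_compat_l _ _ _ beta_ge0 gap; rewrite /d /ham_gap; lra.
Qed.

Lemma Zpart_le : Zpart h beta <= exp d * Zpart h' beta.
Proof. by rewrite /Zpart /sumS big_distrr; apply: sum_le => s; apply: gibbs_w_le. Qed.

Lemma inv_Zpart_le : / Zpart h' beta <= exp d * / Zpart h beta.
Proof.
have := Zpart_gt0 h beta; have := Zpart_gt0 h' beta; have e_gt0 := exp_pos d.
move=> Z'_gt0 Z_gt0.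
rewrite (_ : / Zpart h' beta = exp d * / (exp d * Zpart h' beta)); last by field; lra.
apply: Rmult_le_compat_l; first lra.
by apply: Rinv_le_contravar => //; apply: Zpart_le.
Qed.

End FieldComparison.

Section MeasureComparison.
Variables (N : nat) (h h' : 'I_N -> R) (beta eps : R).
Hypothesis N_gt0 : (0 < N)%N.
Hypothesis beta_ge0 : 0 <= beta.
Hypothesis hh' : forall i, Rabs (h i - h' i) <= eps.
Implicit Types s : config N.
Let d := ham_gap N beta eps.
Let h'h : forall i, Rabs (h' i - h i) <= eps.
Proof. by move=> i; rewrite -Rabs_Ropp Ropp_minus_distr. Qed.

Lemma mu_le s : mu h beta s <= exp (2 * d) * mu h' beta s.
Proof.
rewrite /mu /Rdiv (_ : 2 * d = d + d); last ring.
rewrite exp_plus (_ : forall a b c e, a * b * (c * e) = (a * c) * (b * e)); last by move=> *; ring.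
apply: Rmult_le_compat.
- exact: Rlt_le (gibbs_w_gt0 h beta s).
- exact: Rlt_le (Rinv_0_lt_compat _ (Zpart_gt0 h beta)).
- exact: gibbs_w_le beta_ge0 hh' s.
- exact: inv_Zpart_le beta_ge0 h'h.
Qed.

Lemma muSet_le (A : config N -> Prop) : muSet h beta A <= exp (2 * d) * muSet h' beta A.
Proof.
rewrite /muSet /sumS big_distrr; apply: sum_le => s /=.
rewrite -Rmult_assoc (Rmult_comm (exp _)) Rmult_assoc.
by apply: Rmult_le_compat_l; [exact: proj1 (ind_01 _) | exact: mu_le].
Qed.

Lemma mu_pker_ge s s' : s != s' ->
  exp (- (2 * d)) * (mu h' beta s * pker h' beta s s') <= mu h beta s * pker h beta s s'.
Proof.
move=> ne; rewrite /pker (negbTE ne).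
have mu_poff (g : 'I_N -> R) : mu g beta s * poff g beta s s' =
    ind (l1dist s s' = 2) * / INR N * / 2 ^ N *
    (exp (- beta * Rmax (Ham g s) (Ham g s')) * / Zpart g beta).
  by rewrite /mu /Rdiv Rmult_assoc (Rmult_comm (/ _)) -Rmult_assoc gibbs_w_poff; ring.
rewrite !mu_poff (_ : - (2 * d) = - d + - d); last ring.
rewrite exp_plus (_ : forall a b c e f, a * b * (c * (e * f)) = c * ((a * e) * (b * f)));
  last by move=> *; ring.
have c_ge0 : 0 <= ind (l1dist s s' = 2) * / INR N * / 2 ^ N.
  apply: Rmult_le_pos; last by apply/Rlt_le/Rinv_0_lt_compat/pow_lt; lra.
  exact: Rmult_le_pos (proj1 (ind_01 _)) (Rlt_le _ _ (Rinv_0_lt_compat _ (INR_N_gt0 N_gt0))).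
apply: Rmult_le_compat_l => //; apply: Rmult_le_compat.
- exact: Rlt_le (Rmult_lt_0_compat _ _ (exp_pos _) (exp_pos _)).
- exact: Rlt_le (Rmult_lt_0_compat _ _ (exp_pos _) (Rinv_0_lt_compat _ (Zpart_gt0 h' beta))).
- apply: exp_gibbs_perturb => //.
  have gap t : Ham h t <= Ham h' t + INR N * eps.
    by have := Ham_perturb hh' t; rewrite /Rabs; case: Rcase_abs; lra.
  by rewrite /Rmax; case: Rle_dec; case: Rle_dec => *; have := gap s; have := gap s'; lra.
- have := inv_Zpart_le beta_ge0 hh'; rewrite -/d => Zle.
  have e_gt0 := exp_pos (- d).
  by have := Rmult_le_compat_l _ _ _ (Rlt_le _ _ e_gt0) Zle; rewrite -Rmult_assoc -exp_plus
    Rplus_opp_l exp_0 Rmult_1_l.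
Qed.

Lemma dirf_compare f : exp (- (2 * d)) * dirf h' beta f <= dirf h beta f.
Proof.
rewrite /dirf Rmult_comm Rmult_assoc; apply: Rmult_le_compat_l; first lra.
rewrite /sumS big_distrl; apply: sum_le => s /=; rewrite big_distrl; apply: sum_le => s' /=.
case: (eqVneq s s') => [->|ne]; first by rewrite Rminus_diag /=; lra.
rewrite Rmult_comm -Rmult_assoc; apply: Rmult_le_compat_r; first exact: pow2_ge_0.
exact: mu_pker_ge.
Qed.

Lemma cap_compare (A B : config N -> Prop) : (forall s, A s -> ~ B s) ->
  exp (- (2 * d)) * cap h' beta A B <= cap h beta A B.
Proof.
move=> AB; apply: Rle_trans (dirf_compare (eqpot h beta A B)).
apply: Rmult_le_compat_l; first exact: Rlt_le (exp_pos _).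
apply: cap_le_dirf => // s; [exact: eqpot_A | exact: eqpot_B].
Qed.

End MeasureComparison.

Section SiteSymmetry.
Variables (N n : nat) (h : 'I_N -> R) (beta : R) (lab : 'I_N -> 'I_n).
Variable t : 'I_N -> 'I_N.
Hypothesis t_inv : involutive t.
Hypothesis h_t : forall k, h (t k) = h k.
Hypothesis lab_t : forall k, lab (t k) = lab k.
Implicit Types s : config N.

Definition permute s : config N := [ffun k => s (t k)].

Lemma permute_inj : injective permute.
Proof. by apply: (inv_inj (f := permute)) => s; apply/ffunP => k; rewrite !ffunE t_inv. Qed.

Lemma spin_permute s k : spin (permute s) k = spin s (t k).
Proof. by rewrite /spin ffunE. Qed.

Lemma sumI_permute (F : 'I_N -> R) : sumI (fun k => F (t k)) = sumI F.
Proof. by rewrite /sumI [RHS](reindex_inj (inv_inj t_inv)). Qed.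

Lemma sumS_permute (F : config N -> R) : sumS (fun s => F (permute s)) = sumS F.
Proof. by rewrite /sumS [RHS](reindex_inj permute_inj). Qed.

Lemma Ham_permute s : Ham h (permute s) = Ham h s.
Proof.
rewrite /Ham; congr (_ * _ - _).
  rewrite -sumI_permute; apply: eq_bigr => i _; rewrite -sumI_permute.
  by apply: eq_bigr => j _; rewrite !spin_permute !t_inv.
by rewrite -sumI_permute; apply: eq_bigr => i _; rewrite spin_permute h_t t_inv.
Qed.

Lemma l1dist_permute s s' : l1dist (permute s) (permute s') = l1dist s s'.
Proof. by rewrite /l1dist -sumI_permute; apply: eq_bigr => i _; rewrite !spin_permute t_inv. Qed.

Lemma rho_permute s : rho lab (permute s) = rho lab s.
Proof.
apply: functional_extensionality => l; rewrite /rho -sumI_permute; congr (_ * _).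
by apply: eq_bigr => i _; rewrite spin_permute lab_t t_inv.
Qed.

Lemma pker_permute s s' : pker h beta (permute s) (permute s') = pker h beta s s'.
Proof.
have poff_permute u u' : poff h beta (permute u) (permute u') = poff h beta u u'.
  by rewrite /poff l1dist_permute !Ham_permute.
rewrite /pker (inj_eq permute_inj) poff_permute; case: (s == s') => //; congr (_ - _).
rewrite -sumS_permute; apply: eq_bigr => s'' _; rewrite poff_permute; congr (_ * _).
apply: ind_ext; split=> ne eq; apply: ne; [by rewrite eq | exact: permute_inj].
Qed.

Variables (A B : config N -> Prop).
Hypothesis A_permute : forall s, A (permute s) <-> A s.
Hypothesis B_permute : forall s, B (permute s) <-> B s.

Lemma escape_permute s : escape h beta A B (permute s) = escape h beta A B s.
Proof.
rewrite /escape; congr Rlim; apply: functional_extensionality => T.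
elim: T s => [|T IH] s //; rewrite !hitB_succ -sumS_permute; apply: eq_bigr => s' _.
rewrite pker_permute IH; congr (_ * (_ + _ * _)); apply: ind_ext;
  rewrite A_permute B_permute; tauto.
Qed.

End SiteSymmetry.

Section LevelSets.
Variables (N n : nat) (h : 'I_N -> R) (beta : R) (lab : 'I_N -> 'I_n).
Hypothesis N_gt0 : (0 < N)%N.
Hypothesis h_blocks : forall i j, lab i = lab j -> h i = h j.
Variables (A B : config N -> Prop).
Hypothesis A_rho : forall s s', rho lab s = rho lab s' -> (A s <-> A s').
Hypothesis B_rho : forall s s', rho lab s = rho lab s' -> (B s <-> B s').
Implicit Types s : config N.

Lemma block_sum_rho s s' (l : 'I_n) : rho lab s = rho lab s' ->
  sumI (fun k => (if lab k == l then 1 else 0) * (spin s k - spin s' k)) = 0.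
Proof.
move=> /(f_equal (fun f => f l)); rewrite /rho => E.
have -> : sumI (fun k => (if lab k == l then 1 else 0) * (spin s k - spin s' k)) =
    sumI (fun k => (if lab k == l then 1 else 0) * spin s k)
  - sumI (fun k => (if lab k == l then 1 else 0) * spin s' k).
  by rewrite -sum_sub; apply: eq_bigr => k _; ring.
rewrite (Rmult_eq_reg_l _ _ _ E); first by ring.
exact/Rinv_neq_0_compat/Rgt_not_eq/INR_N_gt0.
Qed.

(* Otherwise every term of [block_sum_rho], multiplied by [spin s i], is nonnegative
   while the [i]-th one equals 2. *)
Lemma swap_partner s s' i : rho lab s = rho lab s' -> s i != s' i ->
  exists j, lab j = lab i /\ s j != s' j /\ s j != s i.
Proof.
move=> ss' si; apply: NNPP => no_partner.
pose c := spin s i.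
have term_ge0 k : 0 <= c * ((if lab k == lab i then 1 else 0) * (spin s k - spin s' k)).
  case: (eqVneq (lab k) (lab i)) => lk; last by rewrite /=; lra.
  case: (eqVneq (s k) (s' k)) => sk; first by rewrite /spin sk Rminus_diag; lra.
  have ski : s k = s i.
    by apply/eqP; apply: contraT => ski; case: no_partner; exists k.
  have s'k : s' k = ~~ s i by move: sk; rewrite ski; case: (s i); case: (s' k).
  by rewrite /c /spin ski s'k; case: (s i) => /=; lra.
have term_i : c * ((if lab i == lab i then 1 else 0) * (spin s i - spin s' i)) = 2.
  by rewrite eqxx /c /spin; move: si; case: (s i); case: (s' i) => //= _; ring.
have := sum_ge_term i term_ge0; rewrite term_i -big_distrr /= -/(sumI _).
by rewrite block_sum_rho //; lra.
Qed.

(* Induction on the number of disagreeing sites: a transposition inside a block maps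
   [s] to a configuration with the same level and one disagreement less, preserving
   the escape probability by [escape_permute]. *)
Lemma escape_rho s s' : rho lab s = rho lab s' -> escape h beta A B s = escape h beta A B s'.
Proof.
move: {2}#|[set k | s k != s' k]| (leqnn #|[set k | s k != s' k]|) => m.
elim: m s => [|m IH] s card_le ss'.
  suff -> : s = s' by [].
  apply/ffunP => k; apply/eqP; apply: contraT => sk.
  by move: card_le; rewrite leqn0 cards_eq0 => /eqP/setP/(_ k); rewrite !inE sk.
case: (pickP (fun k => s k != s' k)) => [i si | agree]; last first.
  by congr escape; apply/ffunP => k; apply/eqP; move: (agree k) => /= /negbFE.
have [j [lj [sj sji]]] := swap_partner ss' si.
have lab_t k : lab (tperm i j k) = lab k by case: tpermP => [->|->|].
have h_t k : h (tperm i j k) = h k by apply: h_blocks.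
pose s2 := permute (tperm i j) s.
have rho_t u : rho lab (permute (tperm i j) u) = rho lab u := rho_permute (tpermK i j) lab_t u.
rewrite -(escape_permute beta (tpermK i j) h_t (A := A) (B := B)) -/s2; last 2 first.
- by move=> u; apply: A_rho.
- by move=> u; apply: B_rho.
apply: IH; last by rewrite rho_t.
have [sj_eq si_eq] : s j = s' i /\ s i = s' j.
  by move: si sj sji; case: (s i); case: (s' i); case: (s j); case: (s' j).
have proper : [set k | s2 k != s' k] \proper [set k | s k != s' k].
  apply/properP; split.
    apply/subsetP => k; rewrite !inE /s2 /permute ffunE.
    by case: tpermP => [->|->|] //; rewrite ?sj_eq ?si_eq eqxx.
  by exists i; rewrite !inE // /s2 /permute ffunE tpermL sj_eq eqxx.
by rewrite -ltnS; apply: leq_trans (proper_card proper) card_le.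
Qed.

End LevelSets.

(* [Rinf] defaults to 0, so only lower bounds at 0 can be transferred to it. *)
Lemma Rinf_le (E : R -> Prop) v : E v -> (forall w, E w -> 0 <= w) -> Rinf E <= v.
Proof.
move=> Ev E_ge0; rewrite /Rinf; case: excluded_middle_informative => [ex|_]; last exact: E_ge0.
by case: (constructive_indefinite_description _ ex) => m [lb _] /=; apply: lb.
Qed.

Lemma Rinf_ge0 (E : R -> Prop) : (forall w, E w -> 0 <= w) -> 0 <= Rinf E.
Proof.
move=> E_ge0; rewrite /Rinf; case: excluded_middle_informative => [ex|_]; last lra.
by case: (constructive_indefinite_description _ ex) => m [_ glb] /=; apply: glb.
Qed.

Lemma Gamma_enum N n (lab : 'I_N -> 'I_n) : enumerates (Gamma lab) (flist (Gamma lab)).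
Proof.
rewrite /flist; case: excluded_middle_informative => [ex|[]].
  by case: (constructive_indefinite_description _ ex).
pose dec (x y : 'I_n -> R) := excluded_middle_informative (x = y).
exists (nodup dec (map (rho lab) (enum (config N)))); split; first exact: NoDup_nodup.
move=> x; rewrite nodup_In in_map_iff; split=> [[s [<- _]] | [s <-]]; first by exists s.
exists s; split=> //; elim: (enum (config N)) (mem_enum (config N) s) => //= s0 r IH.
by rewrite in_cons => /orP [/eqP ->|/IH]; tauto.
Qed.

Lemma lsum_ext (X : Type) (l : list X) F G :
  (forall x, In x l -> F x = G x) -> lsum l F = lsum l G.
Proof. by elim: l => [|a l IH] //= FG; rewrite FG ?IH //; [move=> x lx; apply: FG | ]; tauto. Qed.

Lemma lsum_sumS (X : Type) N (l : list X) (F : config N -> X -> R) :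
  lsum l (fun x => sumS (fun s => F s x)) = sumS (fun s => lsum l (F s)).
Proof.
elim: l => [|a l IH] /=; first by rewrite /sumS big1.
by rewrite IH /sumS -big_split.
Qed.

Lemma lsum_ind_eq (X : Type) (l : list X) (a : X) G :
  NoDup l -> In a l -> lsum l (fun x => ind (a = x) * G x) = G a.
Proof.
elim: l => [|y l IH] //= /NoDup_cons_iff [yl nd] [<-|al].
  rewrite ind_T // (lsum_ext (G := fun _ => 0)) => [|x xl]; last first.
    by rewrite ind_F; [ring | move=> ax; apply: yl; rewrite ax].
  have -> : lsum l (fun _ : X => 0) = 0 by elim: (l) => //= _ r ->; ring.
  ring.
by rewrite IH // ind_F; [ring | move=> ay; apply: yl; rewrite -ay].
Qed.

Lemma lsum_levels (X : Type) N (l : list X) (f : config N -> X) (G : config N -> X -> R) :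
  NoDup l -> (forall s, In (f s) l) ->
  lsum l (fun x => sumS (fun s => ind (f s = x) * G s x)) = sumS (fun s => G s (f s)).
Proof. by move=> nd fl; rewrite lsum_sumS; apply: eq_bigr => s _; apply: lsum_ind_eq. Qed.

Lemma lsum_le_max (X : Type) (l : list X) F : l <> nil ->
  exists x, In x l /\ lsum l F <= INR (length l) * F x.
Proof.
elim: l => [|a l IH] // _; case: l IH => [|b l] IH; first by exists a; split; [left | simpl; lra].
have [//|x [xl le_x]] := IH; set L := lsum (b :: l) F in le_x.
have len_ge0 := pos_INR (length (b :: l)).
have -> : lsum [:: a, b & l] F = F a + L by [].
rewrite (_ : length [:: a, b & l] = S (length (b :: l))) // S_INR.
case: (Rle_dec (F x) (F a)) => Fxa; first by exists a; split; [left | nra].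
by exists x; split; [right | nra].
Qed.

Section CoarseGraining.
Variables (N n : nat) (h : 'I_N -> R) (beta : R) (lab : 'I_N -> 'I_n).
Hypothesis N_gt0 : (0 < N)%N.
Hypothesis beta_ge0 : 0 <= beta.
Implicit Types s : config N.

Let rho_Gamma s : In (rho lab s) (flist (Gamma lab)).
Proof. by apply/(proj2 (Gamma_enum lab)); exists s. Qed.

Lemma card_Gamma_gt0 : 0 < INR (card_setR (Gamma lab)).
Proof.
apply: lt_0_INR; have := rho_Gamma [ffun=> true]; rewrite /card_setR.
by case: (flist _) => //= *; lia.
Qed.

Lemma mum_gt0 x : Gamma lab x -> 0 < mum h beta lab x.
Proof. by case=> s <-; exact: (@muSet_gt0 N h beta (fun s' => rho lab s' = rho lab s) s). Qed.

Lemma dirichlet_lift g : dirichlet h beta lab g = dirf h beta (fun s => g (rho lab s)).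
Proof.
have [nd inG] := Gamma_enum lab; set l := flist (Gamma lab) in nd inG *.
rewrite /dirichlet /dirf; congr (_ * _).
have row x : In x l -> lsum l (fun y => mum h beta lab x * rm h beta lab x y * (g x - g y) ^ 2) =
    sumS (fun s => ind (rho lab s = x) *
      sumS (fun s' => mu h beta s * pker h beta s s' * (g x - g (rho lab s')) ^ 2)).
  move=> xl; have mx_gt0 := mum_gt0 (proj1 (inG x) xl).
  transitivity (lsum l (fun y => sumS (fun s' => ind (rho lab s' = y) *
      sumS (fun s => ind (rho lab s = x) * mu h beta s * pker h beta s s' * (g x - g y) ^ 2)))).
    apply: lsum_ext => y _; rewrite /rm -Rmult_assoc Rinv_r ?Rmult_1_l; last lra.
    transitivity (\big[Rplus/0]_(s : config N) \big[Rplus/0]_(s' : config N)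
      (ind (rho lab s = x) * mu h beta s * (ind (rho lab s' = y) * pker h beta s s') *
        (g x - g y) ^ 2)).
      rewrite /sumS big_distrl; apply: eq_bigr => s _ /=.
      by rewrite big_distrr big_distrl.
    rewrite exchange_big; apply: eq_bigr => s' _ /=.
    by rewrite big_distrr; apply: eq_bigr => s _ /=; ring.
  rewrite (lsum_levels (fun s' y => sumS (fun s => ind (rho lab s = x) * mu h beta s *
    pker h beta s s' * (g x - g y) ^ 2)) nd rho_Gamma).
  rewrite /sumS exchange_big; apply: eq_bigr => s _.
  by rewrite big_distrr; apply: eq_bigr => s' _ /=; ring.
rewrite (lsum_ext row).
exact: (lsum_levels (fun s x => sumS (fun s' => mu h beta s * pker h beta s s' *
  (g x - g (rho lab s')) ^ 2)) nd rho_Gamma).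
Qed.

Lemma mcap_ge0 Am Bm : 0 <= mcap h beta lab Am Bm.
Proof.
apply: Rinf_ge0 => _ [g [_ [_ [_ ->]]]].
by rewrite dirichlet_lift; apply: dirf_ge0.
Qed.

Lemma mcap_le_dirf (Am Bm : ('I_n -> R) -> Prop) (psi : config N -> R) :
  (forall s s', rho lab s = rho lab s' -> psi s = psi s') -> (forall s, 0 <= psi s <= 1) ->
  (forall s, Am (rho lab s) -> psi s = 1) -> (forall s, Bm (rho lab s) -> psi s = 0) ->
  mcap h beta lab Am Bm <= dirf h beta psi.
Proof.
move=> psi_rho psi01 psiA psiB.
pose g y := match excluded_middle_informative (exists s, rho lab s = y) with
  | left ex => psi (proj1_sig (constructive_indefinite_description _ ex)) | right _ => 0 end.
have g_rho s : g (rho lab s) = psi s.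
  rewrite /g; case: excluded_middle_informative => [ex|]; last by case; exists s.
  by case: (constructive_indefinite_description _ ex) => s' /= /psi_rho.
have -> : dirf h beta psi = dirichlet h beta lab g.
  by rewrite dirichlet_lift; congr dirf; apply: functional_extensionality => s; rewrite g_rho.
apply: Rinf_le; last by move=> _ [g' [_ [_ [_ ->]]]]; rewrite dirichlet_lift; apply: dirf_ge0.
exists g; split; [|split; [|split]] => //; move=> _ [s <-]; rewrite g_rho //.
- by move=> /psiA.
- by move=> /psiB.
Qed.

Lemma Rinf_cap_ratio_le (Bm : ('I_n -> R) -> Prop) x : Gamma lab x -> ~ Bm x ->
  0 <= Rinf (fun v => exists x, Gamma lab x /\ ~ Bm x /\
         v = mcap h beta lab (fun y => y = x) Bm / mum h beta lab x) <=
  mcap h beta lab (fun y => y = x) Bm / mum h beta lab x.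
Proof.
have ratio_ge0 v : (exists x, Gamma lab x /\ ~ Bm x /\
    v = mcap h beta lab (fun y => y = x) Bm / mum h beta lab x) -> 0 <= v.
  case=> y [Gy [_ ->]]; apply: Rmult_le_pos; first exact: mcap_ge0.
  exact/Rlt_le/Rinv_0_lt_compat/mum_gt0.
move=> Gx nBx; split; first exact: Rinf_ge0.
by apply: Rinf_le ratio_ge0; exists x.
Qed.

Lemma exists_heavy_level (A : config N -> Prop) : (exists s, A s) ->
  exists s1, A s1 /\ muSet h beta A <=
    INR (card_setR (Gamma lab)) * muSet h beta (fun s => A s /\ rho lab s = rho lab s1).
Proof.
move=> [s0 As0]; have [nd inG] := Gamma_enum lab.
have l_nil : flist (Gamma lab) <> nil by move=> l0; have := rho_Gamma s0; rewrite l0.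
have muA : muSet h beta A = lsum (flist (Gamma lab)) (fun x =>
    sumS (fun s => ind (rho lab s = x) * (ind (A s) * mu h beta s))).
  by rewrite (lsum_levels (fun s _ => ind (A s) * mu h beta s) nd rho_Gamma).
have level_mu x : sumS (fun s => ind (rho lab s = x) * (ind (A s) * mu h beta s)) =
    muSet h beta (fun s => A s /\ rho lab s = x).
  apply: eq_bigr => s _; rewrite -Rmult_assoc; congr (_ * _).
  case: (classic (A s /\ rho lab s = x)) => [[As sx]|nAx].
    by rewrite (ind_T sx) (ind_T As) (ind_T (conj As sx)); ring.
  rewrite (ind_F nAx); case: (classic (A s)) => As; last by rewrite (ind_F As); ring.
  by rewrite (ind_F (P := rho lab s = x)); [ring | move=> sx; apply: nAx].
have [x [xl heavy]] := lsum_le_max (fun x => sumS (fun s =>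
  ind (rho lab s = x) * (ind (A s) * mu h beta s))) l_nil.
rewrite -muA level_mu in heavy.
have [s1 [As1 s1x]] : exists s1, A s1 /\ rho lab s1 = x.
  apply: NNPP => none; suff : muSet h beta (fun s => A s /\ rho lab s = x) = 0.
    by move=> mu0; have := muSet_gt0 h beta As0; rewrite mu0 Rmult_0_r in heavy; lra.
  by apply: big1 => s _; rewrite ind_F ?Rmult_0_l // => sx; apply: none; exists s.
by exists s1; rewrite s1x.
Qed.

End CoarseGraining.

Lemma exists_block_field N n (h : 'I_N -> R) (lab : 'I_N -> 'I_n) (eps : R) :
  (forall i j, lab i = lab j -> Rabs (h i - h j) <= eps) ->
  exists ht : 'I_N -> R, (forall i j, lab i = lab j -> ht i = ht j) /\
    forall i, Rabs (h i - ht i) <= eps.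
Proof.
move=> h_osc; exists (fun i => h (odflt i [pick j | lab j == lab i])); split.
  move=> i j lij; rewrite (eq_pick (_ : _ =1 [pred k | lab k == lab j])) => [|k /=];
    last by rewrite lij.
  by case: pickP => [k|none] //=; move: (none j); rewrite /= eqxx.
move=> i; case: pickP => [k /eqP lki|_] /=; last exact: h_osc.
exact: h_osc (esym lki).
Qed.

Section LevelCapacity.
Variables (N n : nat) (h ht : 'I_N -> R) (beta eps : R) (lab : 'I_N -> 'I_n).
Hypothesis N_gt0 : (0 < N)%N.
Hypothesis beta_ge0 : 0 <= beta.
Hypothesis ht_blocks : forall i j, lab i = lab j -> ht i = ht j.
Hypothesis h_ht : forall i, Rabs (h i - ht i) <= eps.
Variables (Bm : ('I_n -> R) -> Prop) (A : config N -> Prop) (s1 : config N).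
Hypothesis A_s1 : A s1.
Hypothesis A_B : forall s, A s -> ~ Bm (rho lab s).
Implicit Types s : config N.

Let ht_h i : Rabs (ht i - h i) <= eps.
Proof. by rewrite -Rabs_Ropp Ropp_minus_distr. Qed.
Let d := ham_gap N beta eps.
Let B s := Bm (rho lab s).
Let F s := rho lab s = rho lab s1.
Let AF s := A s /\ F s.
Let Lt := escape ht beta F B s1.

Let F_B s : F s -> ~ B s.
Proof. by rewrite /F /B => ->; apply: A_B. Qed.

Let escape_F s : F s -> escape ht beta F B s = Lt.
Proof.
move=> Fs; apply: (escape_rho beta N_gt0 ht_blocks) => // [u u' uu' | u u' uu'];
  by rewrite /F /B uu'.
Qed.

Lemma cap_ge_level : exp (- (2 * d)) * (muSet ht beta AF * Lt) <= cap h beta A B.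
Proof.
have AF_B s : AF s -> ~ B s by case=> _ /F_B.
have escape_AF s : AF s -> Lt <= escape ht beta AF B s.
  by case=> _ Fs; rewrite -(escape_F Fs); apply: escape_anti => // u [].
apply: Rle_trans (@cap_mono N h beta N_gt0 beta_ge0 A B A_B AF (fun s => @proj1 _ _)).
apply: Rle_trans (cap_compare N_gt0 beta_ge0 h_ht AF_B).
apply: Rmult_le_compat_l; first exact: Rlt_le (exp_pos _).
exact: cap_ge_escape.
Qed.

Lemma mcap_le_level :
  mcap h beta lab (fun y => y = rho lab s1) Bm <= exp (2 * d) * (muSet ht beta F * Lt).
Proof.
pose psi := eqpot ht beta F B.
have psi_rho s s' : rho lab s = rho lab s' -> psi s = psi s'.
  move=> ss'; rewrite /psi /eqpot /reach (escape_rho beta N_gt0 ht_blocks _ _ ss').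
  - by rewrite /F /B ss'.
  - by move=> u u' uu'; rewrite /F uu'.
  - by move=> u u' uu'; rewrite /B uu'.
apply: Rle_trans (mcap_le_dirf h N_gt0 beta_ge0 (Am := fun y => y = rho lab s1) (Bm := Bm)
  psi_rho _ _ _) _.
- exact: eqpot_01.
- by move=> s /= Fs; apply: eqpot_A.
- by move=> s Bs; apply: eqpot_B.
have := dirf_compare N_gt0 beta_ge0 ht_h psi; rewrite -/d.
rewrite [dirf ht beta psi](cap_eq_escape N_gt0 beta_ge0 F_B escape_F) => le_cap.
have e_gt0 := exp_pos (2 * d).
apply: Rle_trans (Rmult_le_compat_l _ _ _ (Rlt_le _ _ e_gt0) le_cap).
by rewrite -Rmult_assoc -exp_plus Rplus_opp_r exp_0 Rmult_1_l; right.
Qed.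

Let muA_gt0 : 0 < muSet h beta A. Proof. exact: (muSet_gt0 h beta A_s1). Qed.
Let muAF_gt0 : 0 < muSet h beta AF.
Proof. exact: (muSet_gt0 (A := AF) h beta (conj A_s1 erefl)). Qed.
Let muF_gt0 : 0 < muSet h beta F. Proof. exact: (muSet_gt0 (A := F) h beta erefl). Qed.
Let mutF_gt0 : 0 < muSet ht beta F. Proof. exact: (muSet_gt0 (A := F) ht beta erefl). Qed.
Let mutAF_gt0 : 0 < muSet ht beta AF.
Proof. exact: (muSet_gt0 (A := AF) ht beta (conj A_s1 erefl)). Qed.

Lemma cap_level_product_ge :
  exp (- (2 * d)) ^ 4 * muSet h beta AF * mcap h beta lab (fun y => y = rho lab s1) Bm
  <= cap h beta A B * muSet h beta F.
Proof.
set K := exp (- (2 * d)); set mc := mcap _ _ _ _ _.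
have muAF_pos := muAF_gt0; have mutF_pos := mutF_gt0; have mutAF_pos := mutAF_gt0.
have K_gt0 : 0 < K by apply: exp_pos.
have KE m : K * (exp (2 * d) * m) = m.
  by rewrite -Rmult_assoc -exp_plus Rplus_opp_l exp_0 Rmult_1_l.
have Lt_ge0 : 0 <= Lt by case: (escape_01 ht N_gt0 beta_ge0 F B s1).
have mc_ge0 : 0 <= mc by apply: mcap_ge0.
have Kmc : K * mc <= muSet ht beta F * Lt.
  by rewrite -[_ * Lt]KE; apply: Rmult_le_compat_l; [lra | apply: mcap_le_level].
have KmuAF : K * muSet h beta AF <= muSet ht beta AF.
  by rewrite -[muSet ht _ _]KE; apply: Rmult_le_compat_l; [lra | apply: muSet_le].
have KmuF : K * muSet ht beta F <= muSet h beta F.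
  by rewrite -[muSet h _ F]KE; apply: Rmult_le_compat_l; [lra | apply: muSet_le].
apply: Rle_trans (_ : K * (muSet ht beta AF * Lt) * (K * muSet ht beta F) <= _); last first.
  apply: Rmult_le_compat => //; [apply: Rmult_le_pos; nra | nra | exact: cap_ge_level].
rewrite (_ : K ^ 4 * muSet h beta AF * mc = (K * muSet h beta AF) * (K * mc) * (K * K));
  last by ring.
apply: Rle_trans (_ : muSet ht beta AF * (muSet ht beta F * Lt) * (K * K) <= _);
  last by right; ring.
apply: Rmult_le_compat_r; first nra.
by apply: Rmult_le_compat => //; nra.
Qed.

Lemma hitprob_ge_level (c : R) : muSet h beta A <= c * muSet h beta AF ->
  / c * exp (- (2 * d)) ^ 4 * (mcap h beta lab (fun y => y = rho lab s1) Bm /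
    mum h beta lab (rho lab s1)) <= hitprob h beta A B.
Proof.
move=> heavy; have muA_pos := muA_gt0; have muAF_pos := muAF_gt0; have muF_pos := muF_gt0.
have core := cap_level_product_ge.
set K := exp (- (2 * d)) in core *; set mc := mcap _ _ _ _ _ in core *.
have c_gt0 : 0 < c by nra.
have K4mc_ge0 : 0 <= K ^ 4 * mc.
  by apply: Rmult_le_pos; [apply/pow_le/Rlt_le/exp_pos | apply: mcap_ge0].
rewrite (hitprob_cap N_gt0 beta_ge0 (B := B) A_B muA_gt0).
rewrite /mum -/(muSet h beta F); apply: (Rmult_le_reg_r (muSet h beta A)) => //.
rewrite /Rdiv (Rmult_assoc (cap h beta A B)) Rinv_l ?Rmult_1_r; last lra.
apply: (Rmult_le_reg_r (muSet h beta F)) => //; apply: Rle_trans core.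
rewrite (_ : / c * K ^ 4 * (mc * / muSet h beta F) * muSet h beta A * muSet h beta F =
  K ^ 4 * mc * (muSet h beta A / c)); last by field; lra.
rewrite (_ : K ^ 4 * muSet h beta AF * mc = K ^ 4 * mc * muSet h beta AF); last by ring.
apply: Rmult_le_compat_l => //.
by apply: (Rmult_le_reg_r c) => //; rewrite /Rdiv Rmult_assoc Rinv_l; lra.
Qed.

End LevelCapacity.

Lemma exp_ham_gap_bound N beta eps : 0 <= beta -> 0 <= eps ->
  exp (- 4 * beta * eps * (2 * INR N + 1)) <= exp (- (2 * ham_gap N beta eps)) ^ 4.
Proof.
move=> beta_ge0 eps_ge0; rewrite /= /ham_gap Rmult_1_r -!exp_plus; apply: exp_le.
have := pos_INR N; have : 0 <= beta * eps by apply: Rmult_le_pos.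
by move=> *; nra.
Qed.

Theorem mainTheorem18 (N n : nat) (h : 'I_N -> R) (hinf beta : R)
    (I : 'I_n -> R -> Prop) (lab : 'I_N -> 'I_n)
    (Bm : ('I_n -> R) -> Prop) (A : config N -> Prop) :
  (forall i, Rabs (h i) <= hinf) ->
  0 <= beta ->
  (1 <= n)%coq_nat -> (n <= N)%coq_nat ->
  (forall l x y z, I l x -> I l y -> x <= z <= y -> I l z) ->
  (forall l x y, I l x -> I l y -> Rabs (x - y) <= 2 * hinf / INR n) ->
  (forall l l' x, I l x -> I l' x -> l = l') ->
  (forall x, (exists l, I l x) <-> -hinf <= x <= hinf) ->
  (forall i, I (lab i) (h i)) ->
  (exists x, Bm x) -> (forall x, Bm x -> Gamma lab x) ->
  (exists s, A s) -> (forall s, A s -> ~ Bm (rho lab s)) ->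
  hitprob h beta A (fun s => Bm (rho lab s)) >=
    / INR (card_setR (Gamma lab)) *
    exp (- 4 * beta * (2 * hinf / INR n) * (2 * INR N + 1)) *
    Rinf (fun v => exists x, Gamma lab x /\ ~ Bm x /\
            v = mcap h beta lab (fun y => y = x) Bm / mum h beta lab x).
Proof.
move=> _ beta_ge0 n_ge1 n_le_N _ I_diam _ _ lab_I _ _ A_ne A_B.
have N_gt0 : (0 < N)%N by apply/ltP; lia.
set eps := 2 * hinf / INR n.
have [ht [ht_blocks h_ht]] : exists ht : 'I_N -> R, (forall i j, lab i = lab j -> ht i = ht j) /\
    forall i, Rabs (h i - ht i) <= eps.
  by apply: exists_block_field => i j lij; apply: (I_diam (lab i)); rewrite // lij.
have eps_ge0 : 0 <= eps by apply: Rle_trans (Rabs_pos _) (h_ht (Ordinal N_gt0)).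
have [s1 [A_s1 heavy]] := exists_heavy_level h beta lab A_ne.
have [inf_ge0 inf_le] := Rinf_cap_ratio_le h N_gt0 beta_ge0 (ex_intro _ s1 erefl) (A_B s1 A_s1).
have c_gt0 := card_Gamma_gt0 lab.
apply: Rle_ge; apply: Rle_trans (hitprob_ge_level N_gt0 beta_ge0 ht_blocks h_ht A_s1 A_B heavy).
apply: Rmult_le_compat => //.
  by apply: Rmult_le_pos; [apply/Rlt_le/Rinv_0_lt_compat | apply/Rlt_le/exp_pos].
apply: Rmult_le_compat_l; first exact/Rlt_le/Rinv_0_lt_compat.
exact: exp_ham_gap_bound.
Qed.
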